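(* Let $(R,\mathfrak{m})$ be a local perinormal domain. If $S$ is an integral overring of $R$ such that the induced map $\operatorname{Spec} S \to \operatorname{Spec} R$ is a bijection, then $S = R$.
   Context: All rings are commutative with identity; ''local'' means having a unique maximal ideal; an overring of a domain $R$ is a ring between $R$ and its fraction field. A ring extension $A \subseteq B$ satisfies going-down if whenever $\mathfrak{p} \subset \mathfrak{q}$ are primes of $A$ and $Q$ is a prime of $B$ with $Q \cap A = \mathfrak{q}$, there is a prime $P \subseteq Q$ of $B$ with $P \cap A = \mathfrak{p}$. A domain $R$ is perinormal if every local overring $S$ of $R$ such that $R \subseteq S$ satisfies going-down is a localization of $R$. *)

From mathcomp Require Import all_boot all_algebra.
Set Implicit Arguments. Unset Strict Implicit. Unset Printing Implicit Defensive.
Import GRing.Theory.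
Local Open Scope ring_scope.

(* Convention: all rings considered are subrings of a fixed field K, given as
   Prop-valued predicates on K.  A domain R is modelled as a subring of K such
   that K is the fraction field of R; overrings of R are then subrings of K
   containing R. *)

Section Defs.
Variable K : fieldType.

Definition subring (A : K -> Prop) : Prop :=
  [/\ A 0, A 1, (forall x y, A x -> A y -> A (x - y))
    & (forall x y, A x -> A y -> A (x * y))].

Definition is_frac_field_of (R : K -> Prop) : Prop :=
  forall z : K, exists a b, [/\ R a, R b, b != 0 & z = a / b].

Definition ideal_of (A I : K -> Prop) : Prop :=
  [/\ (forall x, I x -> A x), I 0, (forall x y, I x -> I y -> I (x + y))
    & (forall a x, A a -> I x -> I (a * x))].

Definition prime_of (A P : K -> Prop) : Prop :=
  [/\ ideal_of A P, ~ P 1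
    & (forall x y, A x -> A y -> P (x * y) -> P x \/ P y)].

Definition maximal_of (A M : K -> Prop) : Prop :=
  [/\ ideal_of A M, ~ M 1
    & (forall I, ideal_of A I -> ~ I 1 -> (forall x, M x -> I x) ->
        forall x, I x -> M x)].

Definition local_ring (A : K -> Prop) : Prop :=
  exists M, maximal_of A M /\
    forall N, maximal_of A N -> forall x, N x <-> M x.

Definition overring (R S : K -> Prop) : Prop :=
  subring S /\ (forall x, R x -> S x).

(* going-down for A ⊆ B; contraction Q ∩ A is expressed via A x -> (Q x <-> q x) *)
Definition going_down (A B : K -> Prop) : Prop :=
  forall p q Q : K -> Prop,
    prime_of A p -> prime_of A q -> (forall x, p x -> q x) ->
    prime_of B Q -> (forall x, A x -> (Q x <-> q x)) ->
    exists P : K -> Prop, [/\ prime_of B P, (forall x, P x -> Q x)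
                            & (forall x, A x -> (P x <-> p x))].

Definition is_localization_of (R S : K -> Prop) : Prop :=
  exists T : K -> Prop,
    [/\ (forall t, T t -> R t /\ t != 0), T 1,
        (forall s t, T s -> T t -> T (s * t))
      & (forall z, S z <-> exists a t, [/\ R a, T t & z = a / t])].

Definition perinormal (R : K -> Prop) : Prop :=
  forall S : K -> Prop, overring R S -> local_ring S -> going_down R S ->
    is_localization_of R S.

Definition integral_over (R S : K -> Prop) : Prop :=
  forall s, S s -> exists p : {poly K},
    [/\ p \is monic, (forall i, R p`_i) & root p s].

Definition spec_map_bijective (R S : K -> Prop) : Prop :=
  (forall Q1 Q2, prime_of S Q1 -> prime_of S Q2 ->
     (forall x, R x -> (Q1 x <-> Q2 x)) -> forall x, Q1 x <-> Q2 x) /\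
  (forall p, prime_of R p ->
     exists Q, prime_of S Q /\ forall x, R x -> (Q x <-> p x)).

End Defs.

(* Everything rests on a going-up statement for the integral extension R ⊆ S:
   if Q lies over q and an ideal I of S contracts into q, then I ⊆ Q.  Enlarge
   I to an ideal J maximal among those missing R \ q; J is prime, and
   integrality forces J ∩ R = q, so J = Q by injectivity of Spec S -> Spec R.
   Applied to the prime over the maximal ideal m of R it makes S local; applied
   together with surjectivity it gives going-down.  Perinormality then
   presents S as a localization R_T; every t ∈ T avoids m (else t would lie
   in the maximal ideal of S while being a unit there), hence t is a unit of
   the local ring R, and S = R. *)
From mathcomp Require Import all_boot all_algebra.
From mathcomp Require Import boolp classical_sets.
From mathcomp Require Import ring.
Set Implicit Arguments. Unset Strict Implicit. Unset Printing Implicit Defensive.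
Import GRing.Theory.
Local Open Scope ring_scope.

Section SubringIdeal.
Variables (K : fieldType) (A : K -> Prop).
Hypothesis sA : subring A.

Lemma subring0 : A 0. Proof. by case: sA. Qed.

Lemma subring1 : A 1. Proof. by case: sA. Qed.

Lemma subringN x : A x -> A (- x).
Proof. by case: sA => A0 _ AB _ Ax; rewrite -sub0r; apply: AB. Qed.

Lemma subringD x y : A x -> A y -> A (x + y).
Proof.
by case: sA => _ _ AB _ Ax Ay; rewrite -(opprK y); apply: AB => //; apply: subringN.
Qed.

Lemma subringM x y : A x -> A y -> A (x * y).
Proof. by case: sA => _ _ _ mul; apply: mul. Qed.

Lemma subringX x n : A x -> A (x ^+ n).
Proof.
by move=> Ax; elim: n => [|n IH]; [exact: subring1 | rewrite exprS; apply: subringM].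
Qed.

Lemma subring_sum n (F : 'I_n -> K) : (forall i, A (F i)) -> A (\sum_(i < n) F i).
Proof. by move=> AF; apply: (big_ind A subring0 subringD). Qed.

Variable I : K -> Prop.
Hypothesis iI : ideal_of A I.

Lemma ideal_sub x : I x -> A x. Proof. by case: iI => sub _ _ _; apply: sub. Qed.

Lemma ideal0 : I 0. Proof. by case: iI. Qed.

Lemma idealD x y : I x -> I y -> I (x + y). Proof. by case: iI => _ _ add _; apply: add. Qed.

Lemma idealMl a x : A a -> I x -> I (a * x). Proof. by case: iI => _ _ _ mul; apply: mul. Qed.

Lemma idealMr a x : A a -> I x -> I (x * a).
Proof. by rewrite mulrC; apply: idealMl. Qed.

Lemma idealN x : I x -> I (- x).
Proof. by rewrite -mulN1r; apply: idealMl; apply/subringN/subring1. Qed.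

Lemma idealB x y : I x -> I y -> I (x - y).
Proof. by move=> Ix Iy; apply: idealD => //; apply: idealN. Qed.

Lemma ideal_sum n (F : 'I_n -> K) : (forall i, I (F i)) -> I (\sum_(i < n) F i).
Proof. by move=> IF; apply: (big_ind I ideal0 idealD). Qed.

Lemma idealXX a b n : A a -> A b -> I (a - b) -> I (a ^+ n - b ^+ n).
Proof.
move=> Aa Ab Iab; elim: n => [|n IH]; first by rewrite subrr; apply: ideal0.
have -> : a ^+ n.+1 - b ^+ n.+1 = a * (a ^+ n - b ^+ n) + b ^+ n * (a - b).
  by rewrite !exprS; ring.
by apply: idealD; apply: idealMl => //; apply: subringX.
Qed.

Lemma prime_idealX x n : prime_of A I -> A x -> I (x ^+ n) -> I x.
Proof.
case=> _ nI1 Imul Ax; elim: n => [|n IH]; first by rewrite expr0 => /nI1.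
by rewrite exprS => /(Imul _ _ Ax (subringX n Ax))[] //; exact: IH.
Qed.

Definition ideal_adjoin x : K -> Prop :=
  fun z => exists j a, [/\ I j, A a & z = j + a * x].

Lemma ideal_adjoin_ideal x : A x -> ideal_of A (ideal_adjoin x).
Proof.
move=> Ax; split.
- by move=> _ [j [a [Ij Aa ->]]]; apply: subringD; [exact: ideal_sub | exact: subringM].
- by exists 0, 0; rewrite mul0r addr0; split; [exact: ideal0 | exact: subring0 |].
- move=> _ _ [j1 [a1 [I1 A1 ->]]] [j2 [a2 [I2 A2 ->]]].
  exists (j1 + j2), (a1 + a2); split; [exact: idealD | exact: subringD | ring].
- move=> b _ Ab [j [a [Ij Aa ->]]].
  exists (b * j), (b * a); split; [exact: idealMl | exact: subringM | ring].
Qed.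

Lemma ideal_adjoin_self x : ideal_adjoin x x.
Proof. by exists 0, 1; rewrite add0r mul1r; split; [exact: ideal0 | exact: subring1 |]. Qed.

Lemma ideal_adjoin_sub x y : I y -> ideal_adjoin x y.
Proof. by move=> Iy; exists y, 0; rewrite mul0r addr0; split=> //; exact: subring0. Qed.

End SubringIdeal.

Section MaximalAvoiding.
Variables (K : fieldType) (A : K -> Prop).
Hypothesis sA : subring A.

Definition avoids (J T : K -> Prop) := forall x, J x -> ~ T x.

Definition maximal_avoiding (T J : K -> Prop) :=
  [/\ ideal_of A J, avoids J T
    & forall J', ideal_of A J' -> avoids J' T -> (forall x, J x -> J' x) ->
        forall x, J' x -> J x].

Lemma ideal_bigcup (F : set (set K)) :
  (exists X, F X) -> (forall X, F X -> ideal_of A X) -> total_on F subset ->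
  ideal_of A (\bigcup_(X in F) X)%classic.
Proof.
move=> [X0 FX0] FI Ftot; split.
- by move=> x [X FX Xx]; exact: (ideal_sub (FI X FX) Xx).
- by exists X0 => //; exact: (ideal0 (FI X0 FX0)).
- move=> x y [X FX Xx] [Y FY Yy].
  have [XY|YX] := Ftot X Y FX FY.
  + by exists Y => //; apply: (idealD (FI Y FY) _ Yy); exact: XY.
  + by exists X => //; apply: (idealD (FI X FX) Xx); exact: YX.
- by move=> a x Aa [X FX Xx]; exists X => //; exact: (idealMl (FI X FX) Aa Xx).
Qed.

Lemma exists_maximal_avoiding (I T : K -> Prop) : ideal_of A I -> avoids I T ->
  exists J, maximal_avoiding T J /\ forall x, I x -> J x.
Proof.
move=> iI IT.
pose good X := [/\ ideal_of A X, (forall x, I x -> X x) & avoids X T].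
pose P (X : set K) := (forall x, ~ X x) \/ good X.
have [J [[J0|[iJ IJ JT]] Jmax]] : exists J, P J /\ forall B, (J `<` B)%classic -> ~ P B.
- apply: Zorn_bigcup => F FP Ftot.
  pose F' := [set X | F X /\ exists x, X x]%classic.
  have goodF' X : F' X -> good X by case=> FX [x Xx]; case: (FP X FX) => // /(_ x).
  have -> : (\bigcup_(X in F) X = \bigcup_(X in F') X)%classic.
    by apply/seteqP; split=> x [X FX Xx]; exists X => //; [split=> //; exists x | case: FX].
  have [[X0 F'X0]|noF'] := pselect (exists X, F' X); last first.
    by left=> x [X F'X Xx]; apply: noF'; exists X.
  right; split.
  + apply: ideal_bigcup; first by exists X0.
    * by move=> X /goodF' [].
    * by move=> X Y [FX _] [FY _]; apply: Ftot.
  + by move=> x Ix; exists X0 => //; case: (goodF' X0 F'X0) => _ + _; apply.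
  + by move=> x [X F'X Xx]; case: (goodF' X F'X) => _ _; apply.
- exfalso; apply: (Jmax I); last by right; split.
  split; first by move=> x /J0.
  by move=> IJ; apply: (J0 0); apply: IJ; exact: (ideal0 iI).
exists J; split=> //; split=> // J' iJ' J'T JJ' x J'x.
apply: contrapT => nJx; apply: (Jmax J'); last by right; split=> // y /IJ /JJ'.
by split=> // J'J; apply: nJx; exact: J'J.
Qed.

Lemma maximal_avoiding_adjoin T J y : maximal_avoiding T J -> A y -> ~ J y ->
  exists t, ideal_adjoin A J y t /\ T t.
Proof.
move=> [iJ JT Jmax] Ay nJy; apply: contrapT => noT; apply: nJy.
apply: (Jmax _ (ideal_adjoin_ideal sA iJ Ay)).
- by move=> t Jyt Tt; apply: noT; exists t.
- by move=> t; apply: ideal_adjoin_sub.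
- exact: ideal_adjoin_self.
Qed.

Lemma maximal_avoiding_prime T J : T 1 -> (forall s t, T s -> T t -> T (s * t)) ->
  maximal_avoiding T J -> prime_of A J.
Proof.
move=> T1 Tmul maxJ; have [iJ JT _] := maxJ.
split=> // [/JT //|x y Ax Ay Jxy]; apply: contrapT => /not_orP[nJx nJy].
have [_ [[j1 [a1 [J1 A1 ->]]] Tt1]] := maximal_avoiding_adjoin maxJ Ax nJx.
have [_ [[j2 [a2 [J2 A2 ->]]] Tt2]] := maximal_avoiding_adjoin maxJ Ay nJy.
apply: JT (Tmul _ _ Tt1 Tt2).
have -> : (j1 + a1 * x) * (j2 + a2 * y) =
    (j2 + a2 * y) * j1 + (a1 * x) * j2 + (a1 * a2) * (x * y) by ring.
have Aj2 : A (j2 + a2 * y) by apply: (subringD sA); [exact: (ideal_sub iJ J2) | exact: subringM].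
apply: (idealD iJ); first apply: (idealD iJ).
- exact: (idealMl iJ Aj2 J1).
- by apply: (idealMl iJ) => //; apply: (subringM sA).
- by apply: (idealMl iJ) => //; apply: (subringM sA).
Qed.

Lemma maximal_avoiding1 M : maximal_avoiding (eq 1) M <-> maximal_of A M.
Proof.
split=> [[iM M1 Mmax]|[iM M1 Mmax]]; split=> //.
- by move/M1.
- by move=> I iI nI1 MI; apply: Mmax => // x Ix x1; apply: nI1; rewrite x1.
- by move=> x Mx x1; apply: M1; rewrite x1.
- by move=> I iI I1 MI; apply: Mmax => // /I1.
Qed.

Lemma maximal_prime M : maximal_of A M -> prime_of A M.
Proof.
move/maximal_avoiding1; apply: maximal_avoiding_prime => // s t <- <-.
by rewrite mulr1.
Qed.

Lemma local_proper_ideal_sub M : (forall N, maximal_of A N -> forall x, N x <-> M x) ->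
  forall I, ideal_of A I -> ~ I 1 -> forall x, I x -> M x.
Proof.
move=> uniqM I iI nI1.
have [J [/maximal_avoiding1 maxJ IJ]] : exists J, maximal_avoiding (eq 1) J /\ forall x, I x -> J x.
  by apply: exists_maximal_avoiding => // x Ix x1; apply: nI1; rewrite x1.
by move=> x /IJ Jx; apply/(uniqM _ maxJ).
Qed.

Lemma ideal_zero : ideal_of A (eq 0).
Proof.
split=> [_ <-|//|_ _ <- <-|a _ _ <-]; by [exact: (subring0 sA) | rewrite addr0 | rewrite mulr0].
Qed.

Lemma local_inv_notin M t : (forall N, maximal_of A N -> forall x, N x <-> M x) ->
  A t -> t != 0 -> ~ M t -> A t^-1.
Proof.
move=> uniqM At t0 nMt; apply: contrapT => nAti; apply: nMt.
apply: (local_proper_ideal_sub uniqM (ideal_adjoin_ideal sA ideal_zero At)).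
  move=> [_ [a [<- Aa E]]]; apply: nAti.
  by rewrite -[t^-1]mul1r E add0r mulfK.
exact: (ideal_adjoin_self sA ideal_zero).
Qed.

Lemma local_ring_of_proper_sub M : ideal_of A M -> ~ M 1 ->
  (forall I, ideal_of A I -> ~ I 1 -> forall x, I x -> M x) -> local_ring A.
Proof.
move=> iM nM1 Mtop; exists M; split; first by split=> // I iI nI1 _; apply: Mtop.
move=> N [iN nN1 Nmax] x; split; first exact: Mtop.
by apply: (Nmax _ iM nM1); apply: Mtop.
Qed.

End MaximalAvoiding.

Section IntegralExtension.
Variables (K : fieldType) (R S : K -> Prop).
Hypotheses (sR : subring R) (sS : subring S) (RS : forall x, R x -> S x).
Hypothesis intS : integral_over R S.

(* Multiply an integral equation of s by y^n: if s y ≡ t modulo J, then the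
   homogenized equation yields t^n ∈ J + yR. *)
Lemma integral_congr_pow J s y t : ideal_of S J -> S s -> R y -> R t ->
  J (s * y - t) -> exists n r, R r /\ J (t ^+ n + y * r).
Proof.
move=> iJ Ss Ry Rt Jsyt.
have [p [pm pR ps]] := intS Ss.
set n := (size p).-1.
have sp : size p = n.+1 by rewrite /n prednK // lt0n size_poly_eq0 monic_neq0.
have pn : p`_n = 1 by move/monicP: pm; rewrite lead_coefE.
pose homog u := \sum_(i < n.+1) p`_i * (y ^+ (n - i) * u ^+ i).
have homog_root : homog (s * y) = 0.
  rewrite -(mulr0 (y ^+ n)) -(rootP ps) horner_coef sp mulr_sumr.
  apply: eq_bigr => i _.
  have -> : y ^+ n = y ^+ (n - i) * y ^+ i by rewrite -exprD subnK // -ltnS.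
  by rewrite exprMn; ring.
have homog_congr : J (homog t - homog (s * y)).
  rewrite -sumrB; apply: (ideal_sum iJ) => i; rewrite -!mulrBr.
  apply: (idealMl iJ (RS (pR i))); apply: (idealMl iJ (subringX sS _ (RS Ry))).
  apply: (idealXX sS iJ i (RS Rt) (subringM sS Ss (RS Ry))).
  by rewrite -opprB; apply: (idealN sS iJ).
exists n, (\sum_(i < n) p`_i * (y ^+ (n - i.+1) * t ^+ i)); split.
  apply: (subring_sum sR) => i; apply: (subringM sR (pR i)).
  by apply: (subringM sR); apply: (subringX sR).
suff <- : homog t = t ^+ n + y * \sum_(i < n) p`_i * (y ^+ (n - i.+1) * t ^+ i).
  by rewrite -[homog t]subr0 -homog_root.
rewrite /homog big_ord_recr /= subnn expr0 mul1r pn mul1r addrC mulr_sumr.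
congr (_ + _); apply: eq_bigr => i _.
by rewrite -(subnSK (ltn_ord i)) exprS; ring.
Qed.

Lemma ideal_contraction I : ideal_of S I -> ideal_of R (fun z => R z /\ I z).
Proof.
move=> iI; split.
- by move=> z [].
- by split; [exact: (subring0 sR) | exact: (ideal0 iI)].
- by move=> a b [Ra Ia] [Rb Ib]; split; [exact: (subringD sR) | exact: (idealD iI)].
- by move=> a z Ra [Rz Iz]; split; [exact: (subringM sR) | exact: (idealMl iI (RS Ra))].
Qed.

Lemma maximal_avoiding_contraction q J : prime_of R q ->
  maximal_avoiding S (fun z => R z /\ ~ q z) J -> forall x, R x -> (J x <-> q x).
Proof.
move=> qP maxJ; have [iJ JT _] := maxJ; have [iq _ _] := qP.
have Jq x : R x -> J x -> q x.
  by move=> Rx Jx; apply: contrapT => nqx; exact: JT x Jx (conj Rx nqx).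
move=> y Ry; split; first exact: Jq.
move=> qy; apply: contrapT => nJy.
have [t [[j [s [Jj Ss Et]]] [Rt nqt]]] := maximal_avoiding_adjoin sS maxJ (RS Ry) nJy.
have [n [r [Rr Jtr]]] : exists n r, R r /\ J (t ^+ n + y * r).
  apply: (integral_congr_pow iJ Ss Ry Rt).
  by rewrite Et opprD addrCA subrr addr0; apply: (idealN sS iJ).
apply: nqt; apply: (prime_idealX sR qP Rt (n := n)).
have Rtr : R (t ^+ n + y * r) by apply: (subringD sR); [apply: (subringX sR) | apply: (subringM sR)].
rewrite -(addrK (y * r) (t ^+ n)).
by apply: (idealB sR iq (Jq _ Rtr Jtr)); apply: (idealMr iq Rr qy).
Qed.

Hypothesis spec_inj : forall Q1 Q2, prime_of S Q1 -> prime_of S Q2 ->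
  (forall x, R x -> (Q1 x <-> Q2 x)) -> forall x, Q1 x <-> Q2 x.

Lemma ideal_sub_prime_over q Q I : prime_of R q -> prime_of S Q ->
  (forall x, R x -> (Q x <-> q x)) -> ideal_of S I ->
  (forall x, R x -> I x -> q x) -> forall x, I x -> Q x.
Proof.
move=> qP QP Qq iI Iq.
pose T z := R z /\ ~ q z.
have [J [maxJ IJ]] : exists J, maximal_avoiding S T J /\ forall x, I x -> J x.
  by apply: (exists_maximal_avoiding iI) => x Ix [Rx nqx]; apply/nqx/Iq.
have JP : prime_of S J.
  apply: (maximal_avoiding_prime sS _ _ maxJ).
    by split; [exact: (subring1 sR) | case: qP].
  move=> a b [Ra nqa] [Rb nqb]; split; first exact: (subringM sR).
  by case: qP => _ _ /(_ a b Ra Rb) /[apply] [[]].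
have JQ x : R x -> (J x <-> Q x).
  by move=> Rx; rewrite (maximal_avoiding_contraction qP maxJ Rx) Qq.
by move=> x /IJ Jx; apply/(spec_inj JP QP JQ).
Qed.

Lemma integral_going_down : (forall p, prime_of R p ->
  exists Q, prime_of S Q /\ forall x, R x -> (Q x <-> p x)) -> going_down R S.
Proof.
move=> spec_surj p q Q pP qP pq QP Qq.
have [P [PP Pp]] := spec_surj p pP; exists P; split=> //.
have [iP _ _] := PP.
by apply: (ideal_sub_prime_over qP QP Qq iP) => z Rz /(Pp z Rz); apply: pq.
Qed.

End IntegralExtension.

Lemma localization_sub_of_local (K : fieldType) (R S : K -> Prop) m Q :
  subring R -> (forall N, maximal_of R N -> forall x, N x <-> m x) ->
  is_localization_of R S -> ideal_of S Q -> ~ Q 1 -> (forall x, R x -> m x -> Q x) ->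
  forall x, S x -> R x.
Proof.
move=> sR uniq_m [T [Tnz _ _ ST]] iQ nQ1 mQ _ /ST[a [t [Ra Tt ->]]].
have [Rt t0] := Tnz t Tt.
suff Rti : R t^-1 by apply: (subringM sR).
apply: (local_inv_notin sR uniq_m Rt t0) => mt; apply: nQ1.
have Sti : S t^-1 by apply/ST; exists 1, t; rewrite div1r; split=> //; exact: (subring1 sR).
by rewrite -(mulVf t0); apply: (idealMl iQ Sti); apply: mQ.
Qed.

Theorem proposition3p3 (K : fieldType) (R S : K -> Prop) :
  subring R -> is_frac_field_of R -> local_ring R -> perinormal R ->
  overring R S -> integral_over R S -> spec_map_bijective R S ->
  forall x, S x <-> R x.
Proof.
move=> sR _ [m [mmax uniq_m]] perinormalR [sS RS] intS [spec_inj spec_surj].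
have mP := maximal_prime sR mmax.
have [Q [QP Qm]] := spec_surj m mP.
have [iQ nQ1 _] := QP.
have Qtop I : ideal_of S I -> ~ I 1 -> forall x, I x -> Q x.
  move=> iI nI1; apply: (ideal_sub_prime_over sR sS RS intS spec_inj mP QP Qm iI).
  move=> x Rx Ix; apply: (local_proper_ideal_sub uniq_m (ideal_contraction sR RS iI)).
    by case.
  by split.
have locS : local_ring S := local_ring_of_proper_sub iQ nQ1 Qtop.
have gdS : going_down R S := integral_going_down sR sS RS intS spec_inj spec_surj.
have locz := perinormalR S (conj sS RS) locS gdS.
move=> x; split; last exact: RS.
by apply: (localization_sub_of_local sR uniq_m locz iQ nQ1) => y Ry /(Qm y Ry).
Qed.
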